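(* Let $k$ be a positive integer and $I \subseteq \{1,\dots,k\}$. Let $G$ be a $(26k+24|I|)$-connected graph and let $S = \{\{s_1,t_1\},\dots,\{s_k,t_k\}\}$ where $s_1,\dots,s_k,t_1,\dots,t_k$ are $2k$ distinct vertices of $G$. Then some nice partition of $G$ has a parity breaking matching for $(S,I)$ if and only if every nice partition of $G$ has a parity breaking matching for $(S,I)$.
   Context: All graphs are finite and simple. A partition $(A,B)$ of $G$ is a partition of $V(G)$ into two sets $A,B$. For such a partition, $G_{A,B}$ denotes the graph $G[A] \cup G[B]$, i.e. the graph whose edges are the edges of $G$ with both ends in $A$ or both ends in $B$. An odd cycle cover of $G$ is a set $X \subseteq V(G)$ such that $G - X$ is bipartite; it is minimum if it has the smallest possible size. A partition $(A,B)$ of $G$ is nice if there is a minimum odd cycle cover $X$ of $G$ such that $A \setminus X$ and $B \setminus X$ are both independent sets of $G$, every vertex of $X$ having more neighbours in $B\setminus X$ than in $A \setminus X$ lies in $A$, and every vertex of $X$ having more neighbours in $A\setminus X$ than in $B\setminus X$ lies in $B$. For $S = \{\{s_1,t_1\},\dots,\{s_k,t_k\}\}$ and $I \subseteq \{1,\dots,k\}$, a parity breaking matching for $(S,I)$ with respect to a partition $(A,B)$ is a matching $M = \{m_i\}_{i \in I}$ of $G$ (indexed by $I$) with $M \subseteq E(G_{A,B})$ such that $m_i \cap \{s_j,t_j\} = \emptyset$ for all $i \in I$ and all $j \in \{1,\dots,k\}$ with $j \neq i$. *)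

(* A simple graph on a finite vertex type T is given by a
   symmetric irreflexive relation e : rel T. *)
From mathcomp Require Import all_boot.
Set Implicit Arguments. Unset Strict Implicit. Unset Printing Implicit Defensive.

Section Graphs.
Variables (T : finType) (e : rel T).

Definition del_rel (X : {set T}) : rel T :=
  fun x y => [&& e x y, x \notin X & y \notin X].

Definition k_connected (c : nat) : Prop :=
  c < #|T| /\
  forall X : {set T}, #|X| < c ->
    forall u v, u \notin X -> v \notin X -> connect (del_rel X) u v.

Definition independent (A : {set T}) : Prop :=
  forall u v, u \in A -> v \in A -> ~~ e u v.

Definition bipartite_minus (X : {set T}) : Prop :=
  exists c : T -> bool, forall u v, u \notin X -> v \notin X -> e u v -> c u != c v.

Definition odd_cycle_cover (X : {set T}) : Prop := bipartite_minus X.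

Definition min_odd_cycle_cover (X : {set T}) : Prop :=
  odd_cycle_cover X /\ forall Y : {set T}, odd_cycle_cover Y -> #|X| <= #|Y|.

Definition ndeg (x : T) (A : {set T}) : nat := #|[set y in A | e x y]|.

Definition nice (A : {set T}) : Prop :=
  let B := ~: A in
  exists X : {set T}, [/\ min_odd_cycle_cover X,
    independent (A :\: X), independent (B :\: X),
    (forall x, x \in X -> ndeg x (A :\: X) < ndeg x (B :\: X) -> x \in A) &
    (forall x, x \in X -> ndeg x (B :\: X) < ndeg x (A :\: X) -> x \in B)].

Definition part_edge (A : {set T}) (u v : T) : bool :=
  e u v && ((u \in A) == (v \in A)).

(* A parity breaking matching for (S, I) w.r.t. the partition (A, ~: A),
   where S = {{s i, t i} | i < k}.  The matching is M = {m_i}_{i in I},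
   m_i = {(m i).1, (m i).2}. *)
Definition parity_breaking_matching (k : nat) (s t : 'I_k -> T) (I : {set 'I_k})
    (A : {set T}) (m : 'I_k -> T * T) : Prop :=
  [/\ (forall i, i \in I -> part_edge A (m i).1 (m i).2),
      (forall i j, i \in I -> j \in I -> i != j ->
         [disjoint [set (m i).1; (m i).2] & [set (m j).1; (m j).2]]) &
      (forall i j, i \in I -> j != i ->
         [disjoint [set (m i).1; (m i).2] & [set s j; t j]])].

Definition has_pbm (k : nat) (s t : 'I_k -> T) (I : {set 'I_k}) (A : {set T}) : Prop :=
  exists m : 'I_k -> T * T, parity_breaking_matching s t I A m.

End Graphs.

From mathcomp Require Import all_boot zify.
From Stdlib Require Import Classical.
Set Implicit Arguments. Unset Strict Implicit. Unset Printing Implicit Defensive.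

(* Let (A0, B0) be a nice partition with a parity breaking matching M0 and (A, B) any
   nice partition, with minimum odd cycle covers X0 and X.  If |X| >= 2k + 2|I|, no set of
   fewer vertices is an odd cycle cover, so edges inside the parts of (A, B) can be chosen
   greedily, avoiding the terminals and the edges chosen before.  Otherwise W = X0 ∪ X is
   small, G - W is connected and properly 2-coloured by both partitions, so up to swapping
   A and B they agree outside W.  The degree conditions of niceness then give every vertex
   x on which they disagree at least (c - 2|W|)/2 neighbours outside W on each side, where
   c is the connectivity; so each edge of M0 that is no longer inside a part is rerouted
   from such an endpoint x to a fresh neighbour on x's new side. *)

Section Graph.
Variables (T : finType) (e : rel T).

Lemma ndegS x (A B : {set T}) : A \subset B -> ndeg e x A <= ndeg e x B.
Proof.
move=> sAB; apply: subset_leq_card; apply/subsetP=> y.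
by rewrite !inE => /andP[/(subsetP sAB) -> ->].
Qed.

Lemma ndeg_le_card x (A : {set T}) : ndeg e x A <= #|A|.
Proof. by apply: subset_leq_card; apply/subsetP=> y; rewrite inE => /andP[]. Qed.

Lemma ndegU x (A B : {set T}) : ndeg e x (A :|: B) <= ndeg e x A + ndeg e x B.
Proof.
apply: leq_trans (leq_card_setU _ _).1; apply: subset_leq_card.
by apply/subsetP=> y; rewrite !inE andb_orl.
Qed.

Lemma ndeg_split x (A W : {set T}) :
  ndeg e x [set: T] <= #|W| + ndeg e x (A :\: W) + ndeg e x (~: A :\: W).
Proof.
have coverT : [set: T] \subset W :|: ((A :\: W) :|: (~: A :\: W)).
  by apply/subsetP=> y _; rewrite !inE; case: (y \in W); case: (y \in A).
apply: leq_trans (ndegS x coverT) _; apply: leq_trans (ndegU _ _ _) _.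
by rewrite -addnA leq_add ?ndeg_le_card ?ndegU.
Qed.

Lemma ndeg_independent x (A : {set T}) :
  independent e A -> x \in A -> ndeg e x A = 0.
Proof.
move=> indA xA; apply/eqP; rewrite cards_eq0; apply/eqP/setP=> y.
by rewrite !inE; apply/andP=> [[yA]]; apply/negP/indA.
Qed.

Lemma part_edgeC (A : {set T}) u v : part_edge e (~: A) u v = part_edge e A u v.
Proof. by rewrite /part_edge !inE; case: (u \in A); case: (v \in A). Qed.

Lemma part_edge_outside (A Y : {set T}) :
  ~ odd_cycle_cover e Y -> exists u v, [/\ u \notin Y, v \notin Y & part_edge e A u v].
Proof.
move=> notY; apply: NNPP => noedge; apply: notY.
exists (fun y => y \in A) => u v uY vY euv; apply/negP=> /eqP sameAB.
by apply: noedge; exists u, v; rewrite /part_edge euv sameAB eqxx.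
Qed.

Lemma part_edge_flipped (A0 A : {set T}) u v :
  part_edge e A0 u v -> ~~ part_edge e A u v ->
  ((u \in A0) != (u \in A)) || ((v \in A0) != (v \in A)).
Proof.
rewrite /part_edge => /andP[-> /=].
by case: (u \in A0); case: (u \in A); case: (v \in A0); case: (v \in A).
Qed.

Lemma setCD_eq (A0 A W : {set T}) : A0 :\: W = A :\: W -> ~: A0 :\: W = ~: A :\: W.
Proof.
move/setP=> agree; apply/setP=> y; have := agree y; rewrite !inE.
by case: (y \in W) => //=; move->.
Qed.

Lemma k_connected_ndeg (e_irr : irreflexive e) c x :
  k_connected e c -> c <= ndeg e x [set: T].
Proof.
case=> cT conn; rewrite leqNgt; apply/negP; rewrite /ndeg.
set N := [set y in [set: T] | e x y] => small.
have xN : x \notin N by rewrite !inE e_irr.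
have coverT : [set: T] \subset x |: N.
  apply/subsetP=> v _; rewrite in_setU1; apply/norP=> [[vx vN]].
  have /connectP[[|y p] /= xpath xv] := conn N small x v xN vN.
    by move: vx; rewrite xv eqxx.
  by case/andP: xpath => /and3P[xy _]; rewrite !inE xy.
move: (subset_leq_card coverT); rewrite cardsT cardsU1 xN add1n.
by move=> /leq_trans/(_ small); rewrite leqNgt cT.
Qed.

Lemma min_odd_cycle_cover_exists : exists X, min_odd_cycle_cover e X.
Proof.
suff exmin n (Y : {set T}) : #|Y| <= n -> odd_cycle_cover e Y ->
    exists X, min_odd_cycle_cover e X.
  by apply: (exmin _ [set: T] (leqnn _)); exists xpred0 => u; rewrite in_setT.
elim: n Y => [|n IH] Y Yn occY.
  by exists Y; split=> // Z _; move: Yn; rewrite leqn0 => /eqP ->.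
have [[Z [occZ ZY]] | nosmaller] := classic (exists Z, odd_cycle_cover e Z /\ #|Z| < #|Y|).
  by apply: (IH Z) => //; lia.
exists Y; split=> // Z occZ; rewrite leqNgt; apply/negP=> ZY.
by apply: nosmaller; exists Z.
Qed.

Definition nice_for (A X : {set T}) : Prop :=
  [/\ independent e (A :\: X), independent e (~: A :\: X),
    (forall x, x \in X -> ndeg e x (A :\: X) < ndeg e x (~: A :\: X) -> x \in A) &
    (forall x, x \in X -> ndeg e x (~: A :\: X) < ndeg e x (A :\: X) -> x \in ~: A)].

Lemma niceP (A : {set T}) :
  nice e A <-> exists X, min_odd_cycle_cover e X /\ nice_for A X.
Proof.
split=> [[X [minX i1 i2 r1 r2]] | [X [minX [i1 i2 r1 r2]]]]; exists X; by split.
Qed.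

Lemma nice_forC (A X : {set T}) : nice_for A X -> nice_for (~: A) X.
Proof. by case=> i1 i2 r1 r2; split; rewrite ?setCK. Qed.

Lemma nice_exists : exists A, nice e A.
Proof.
have [X [[c colour] minX]] := min_odd_cycle_cover_exists.
pose A0 := [set x | (x \notin X) && c x].
pose B0 := [set x | (x \notin X) && ~~ c x].
pose A := A0 :|: [set x in X | ndeg e x A0 <= ndeg e x B0].
have EA : A :\: X = A0.
  by apply/setP=> x; rewrite !inE; case: (x \in X); rewrite ?andbF ?orbF.
have EB : ~: A :\: X = B0.
  by apply/setP=> x; rewrite !inE; case: (x \in X); rewrite ?andbF ?orbF.
exists A; apply/niceP; exists X; split; first by split=> //; exists c.
rewrite /nice_for EA EB.
split=> [u v | u v | x xX lt | x xX lt]; rewrite !inE.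
- move=> /andP[uX cu] /andP[vX cv]; apply/negP=> /(colour u v uX vX).
  by rewrite cu cv.
- move=> /andP[uX cu] /andP[vX cv]; apply/negP=> /(colour u v uX vX).
  by rewrite (negbTE cu) (negbTE cv).
- by rewrite xX ltnW ?orbT.
- by rewrite xX -ltnNge lt.
Qed.

Lemma nice_for_sides (A X : {set T}) u v :
  nice_for A X -> u \notin X -> v \notin X -> e u v -> (u \in A) != (v \in A).
Proof.
case=> indA indB _ _ uX vX euv.
case uA: (u \in A); case vA: (v \in A) => //.
- by have := indA u v; rewrite !inE uA vA uX vX euv => /(_ isT isT).
- by have := indB u v; rewrite !inE uA vA uX vX euv => /(_ isT isT).
Qed.

(* Both partitions are proper 2-colourings of the connected graph [G - W]. *)
Lemma nice_for_agree c (A0 X0 A X W : {set T}) :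
  k_connected e c -> #|W| < c -> nice_for A0 X0 -> nice_for A X ->
  X0 \subset W -> X \subset W ->
  A0 :\: W = A :\: W \/ A0 :\: W = ~: A :\: W.
Proof.
move=> [cT conn] Wc nice0 niceX sX0 sX.
have [v _ vW] : exists2 v, v \in [set: T] & v \notin W.
  apply/subsetPn; apply: contraTN cT => /subset_leq_card; rewrite cardsT; lia.
pose same y := (y \in A0) == (y \in A).
have same_edge y z : y \notin W -> z \notin W -> e y z -> same y = same z.
  move=> yW zW eyz.
  have outside (X' : {set T}) w : X' \subset W -> w \notin W -> w \notin X'.
    by move=> sX'; apply: contra; apply: (subsetP sX').
  move: (nice_for_sides nice0 (outside _ y sX0 yW) (outside _ z sX0 zW) eyz).
  move: (nice_for_sides niceX (outside _ y sX yW) (outside _ z sX zW) eyz).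
  by rewrite /same; case: (y \in A0); case: (y \in A); case: (z \in A0); case: (z \in A).
have same_v y : y \notin W -> same y = same v.
  move=> yW; have /connectP[p vpath ->] := conn W Wc v y vW yW.
  elim: p v vW vpath {yW} => [|z p IH] w wW //= /andP[/and3P[ewz _ zW] zpath].
  by rewrite (IH z zW zpath) (same_edge w z).
case sv: (same v); [left | right]; apply/setP=> y; rewrite !inE.
all: case yW: (y \in W) => //=; have := same_v y (negbT yW); rewrite sv /same.
- by move/eqP.
- by case: (y \in A0); case: (y \in A).
Qed.

Lemma nice_for_ndeg (A X W : {set T}) x :
  nice_for A X -> X \subset W -> x \in A ->
  ndeg e x (A :\: W) <= #|W| + ndeg e x (~: A :\: W).
Proof.
move=> niceA sXW xA; have [indA _ _ r2] := niceA.
have sDW (P : {set T}) : P :\: W \subset P :\: X by apply: setDS.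
case xX: (x \in X); last first.
  apply: leq_trans (ndegS x (sDW A)) _.
  by rewrite (ndeg_independent indA) // !inE xA xX.
have sBX : ~: A :\: X \subset W :|: (~: A :\: W).
  by apply/subsetP=> y; rewrite !inE; case: (y \in W) => //= /andP[].
have := ndegS x (sDW A); have := ndegS x sBX; have := ndegU x W (~: A :\: W).
have := ndeg_le_card x W.
have : ndeg e x (A :\: X) <= ndeg e x (~: A :\: X).
  by rewrite leqNgt; apply/negP=> /(r2 x xX); rewrite inE xA.
lia.
Qed.

Lemma flipped_nbrs c (A0 X0 A X W : {set T}) x :
  nice_for A0 X0 -> nice_for A X -> X0 \subset W -> X \subset W ->
  A0 :\: W = A :\: W -> c <= ndeg e x [set: T] -> (x \in A0) != (x \in A) ->
  c <= 2 * #|W| + 2 * #|[set y | part_edge e A x y]|.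
Proof.
wlog xA0 : A0 A / x \in A0 => [gen | nice0 niceX sX0 sX agree deg].
  move=> nice0 niceX sX0 sX agree deg flip.
  case xA0: (x \in A0); first by apply: (gen A0 A).
  have -> : [set y | part_edge e A x y] = [set y | part_edge e (~: A) x y].
    by apply/setP=> y; rewrite !inE part_edgeC.
  apply: (gen (~: A0) (~: A)) (nice_forC nice0) (nice_forC niceX) sX0 sX _ deg _.
  - by rewrite inE xA0.
  - exact: setCD_eq.
  - by rewrite !inE xA0 in flip *.
move=> flip; have xA : x \notin A by move: flip; rewrite xA0; case: (x \in A).
have le0 := nice_for_ndeg nice0 sX0 xA0.
have xnA : x \in ~: A by rewrite inE.
have le1 := nice_for_ndeg (nice_forC niceX) sX xnA; rewrite setCK in le1.
rewrite agree (setCD_eq agree) in le0.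
have nbrs : ndeg e x (~: A :\: W) <= #|[set y | part_edge e A x y]|.
  apply: subset_leq_card; apply/subsetP=> y; rewrite !inE /part_edge (negbTE xA).
  by case/andP=> /andP[_ /negbTE -> ->].
have := ndeg_split x A W; lia.
Qed.
End Graph.

Section Matching.
Variables (T : finType) (e : rel T) (k : nat) (s t : 'I_k -> T) (I : {set 'I_k}).

Definition pair_set (p : T * T) : {set T} := [set p.1; p.2].

Lemma disjoint_pair_set p (B : {set T}) :
  [disjoint pair_set p & B] = (p.1 \notin B) && (p.2 \notin B).
Proof. by rewrite disjoints_subset subUset !sub1set !inE. Qed.

Definition avoiding_matching (m : 'I_k -> T * T) : Prop :=
  (forall i j, i \in I -> j \in I -> i != j ->
     [disjoint pair_set (m i) & pair_set (m j)]) /\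
  (forall i j, i \in I -> j != i -> [disjoint pair_set (m i) & [set s j; t j]]).

Definition terminals : {set T} := [set s j | j : 'I_k] :|: [set t j | j : 'I_k].

Definition blocked (m : 'I_k -> T * T) i : {set T} :=
  terminals :|: [set (m j).1 | j in I :\ i] :|: [set (m j).2 | j in I :\ i].

Lemma card_terminals : #|terminals| <= 2 * k.
Proof.
apply: leq_trans (leq_card_setU _ _).1 _.
by rewrite mul2n -addnn leq_add // (leq_trans (leq_imset_card _ _)) ?card_ord.
Qed.

Lemma card_blocked m i : i \in I -> #|blocked m i| < 2 * k + 2 * #|I|.
Proof.
move=> iI; have cardI : #|I :\ i| < #|I| by rewrite (cardsD1 i I) iI.
have := card_terminals.
have := leq_imset_card (fun j => (m j).1) (I :\ i).
have := leq_imset_card (fun j => (m j).2) (I :\ i).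
rewrite /blocked; set X1 := [set (m j).1 | j in I :\ i]; set X2 := [set (m j).2 | j in I :\ i].
have := (leq_card_setU terminals X1).1; have := (leq_card_setU (terminals :|: X1) X2).1.
move: cardI; set n := #|I :\ i|; lia.
Qed.

Lemma avoiding_matching_upd m i p :
  avoiding_matching m -> i \in I ->
  (forall z, z \in pair_set p -> (z \in pair_set (m i)) || (z \notin blocked m i)) ->
  avoiding_matching [eta m with i |-> p].
Proof.
case=> disj avoid iI free.
have free_pairs j : j \in I -> j != i -> [disjoint pair_set p & pair_set (m j)].
  move=> jI ji; rewrite disjoints_subset; apply/subsetP=> z /free /orP[zi | zB].
    by rewrite inE (disjointFr (disj i j iI jI _) zi) // eq_sym.
  rewrite inE; apply: contra zB; rewrite !inE => /orP[] /eqP ->; apply/orP.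
    by left; apply/orP; right; apply/imsetP; exists j; rewrite // !inE ji.
  by right; apply/imsetP; exists j; rewrite // !inE ji.
have free_terminals j : j != i -> [disjoint pair_set p & [set s j; t j]].
  move=> ji; rewrite disjoints_subset; apply/subsetP=> z /free /orP[zi | zB].
    by rewrite inE (disjointFr (avoid i j iI ji) zi).
  rewrite inE; apply: contra zB; rewrite !inE => /orP[] /eqP ->; apply/orP; left.
    by apply/orP; left; apply/orP; left; apply/imsetP; exists j.
  by apply/orP; left; apply/orP; right; apply/imsetP; exists j.
split=> [j1 j2 j1I j2I | j1 j j1I jj1] /=.
- case: (eqVneq j1 i) => [-> | j1i]; case: (eqVneq j2 i) => [_ | j2i] //.
  + by move=> _; apply: free_pairs.
  + by move=> _; rewrite disjoint_sym; apply: free_pairs.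
  + exact: disj.
- case: (eqVneq j1 i) => [ji | j1i]; last exact: avoid.
  by apply: free_terminals; rewrite -ji.
Qed.

(* Pairs are repaired one at a time; a new pair may reuse the vertices of the pair it replaces. *)
Lemma has_pbm_by_repair (Q : ('I_k -> T * T) -> Prop) (A : {set T}) m0 :
  Q m0 -> avoiding_matching m0 ->
  (forall m i, Q m -> avoiding_matching m -> i \in I ->
     ~~ part_edge e A (m i).1 (m i).2 ->
     exists2 p, Q [eta m with i |-> p] & part_edge e A p.1 p.2 /\
       forall z, z \in pair_set p -> (z \in pair_set (m i)) || (z \notin blocked m i)) ->
  has_pbm e s t I A.
Proof.
move=> Qm0 avm0 repair.
pose bad m := [set i in I | ~~ part_edge e A (m i).1 (m i).2].
suff : forall n m, #|bad m| < n -> Q m -> avoiding_matching m -> has_pbm e s t I A.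
  by move/(_ _ m0 (ltnSn _) Qm0 avm0).
elim=> // n IH m bad_n Qm avm.
case: (set_0Vmem (bad m)) => [bad0 | [i]].
  case: avm => disj avoid; exists m; split=> // i iI.
  by apply: contraFT (in_set0 i) => notpe; rewrite -bad0 inE iI.
rewrite inE => /andP[iI badi].
have [p Qp [edge_p free]] := repair m i Qm avm iI badi.
apply: (IH _ _ Qp (avoiding_matching_upd avm iI free)).
have bad_upd : bad [eta m with i |-> p] \subset bad m :\ i.
  apply/subsetP=> j; rewrite !inE /=; case: eqP => [-> | _] //=.
  by rewrite edge_p andbF.
apply: leq_ltn_trans (subset_leq_card bad_upd) _.
by move: bad_n; rewrite (cardsD1 i (bad m)) !inE iI badi.
Qed.

Lemma has_pbmC (A : {set T}) : has_pbm e s t I A -> has_pbm e s t I (~: A).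
Proof. by case=> m [edges disj avoid]; exists m; split=> // i /edges; rewrite part_edgeC. Qed.

Lemma has_pbm_transfer (A0 A : {set T}) :
  (forall x, (x \in A0) != (x \in A) ->
     2 * k + 2 * #|I| <= #|[set y | part_edge e A x y]|) ->
  has_pbm e s t I A0 -> has_pbm e s t I A.
Proof.
move=> rich [m0 [edges0 disj0 avoid0]].
pose Q m := forall j, j \in I -> part_edge e A0 (m j).1 (m j).2 || part_edge e A (m j).1 (m j).2.
apply: (@has_pbm_by_repair Q A m0) => [j jI | | m i Qm avm iI badi].
- by rewrite edges0.
- by split.
have edge0 : part_edge e A0 (m i).1 (m i).2.
  by have := Qm i iI; rewrite (negbTE badi) orbF.
have [x xi flip] : exists2 x, x \in pair_set (m i) & (x \in A0) != (x \in A).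
  case/orP: (part_edge_flipped edge0 badi) => flip.
    by exists (m i).1; rewrite // !inE eqxx.
  by exists (m i).2; rewrite // !inE eqxx orbT.
have [y] : exists2 y, y \in [set y | part_edge e A x y] & y \notin blocked m i.
  apply/subsetPn; apply/negP=> /subset_leq_card.
  by have := rich x flip; have := card_blocked m iI; lia.
rewrite inE => xy yB; exists (x, y).
  by move=> j jI /=; case: eqP => [_ | _] /=; [rewrite xy orbT | apply: Qm].
by split=> // z /set2P[-> | ->] /=; rewrite ?xi ?yB ?orbT.
Qed.

Section Terminals.
Hypotheses (s_inj : injective s) (t_inj : injective t) (st_dis : forall i j, s i != t j).

Lemma terminal_pairs_avoiding : avoiding_matching (fun i => (s i, t i)).
Proof.
have sep i j : i != j -> [disjoint pair_set (s i, t i) & [set s j; t j]].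
  move=> ij; rewrite disjoint_pair_set /= !inE (inj_eq s_inj) (inj_eq t_inj).
  by rewrite (negbTE ij) (negbTE (st_dis i j)) [t i == _]eq_sym (negbTE (st_dis j i)).
by split=> i j _ => [_ |]; [apply: sep | rewrite eq_sym; apply: sep].
Qed.

(* Without small odd cycle covers, every partition has many edges inside its parts. *)
Lemma has_pbm_of_large_covers (A : {set T}) :
  (forall Y, odd_cycle_cover e Y -> 2 * k + 2 * #|I| <= #|Y|) ->
  has_pbm e s t I A.
Proof.
move=> large; apply: (@has_pbm_by_repair (fun _ => True) A _ Logic.I terminal_pairs_avoiding).
move=> m i _ _ iI _.
have notocc : ~ odd_cycle_cover e (blocked m i).
  by move/large; rewrite leqNgt card_blocked.
have [u [v [uB vB uv]]] := part_edge_outside A notocc.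
exists (u, v) => //; split=> // z.
by move=> /set2P[-> | ->] /=; rewrite ?uB ?vB orbT.
Qed.
End Terminals.
End Matching.

Theorem corollary5 (T : finType) (e : rel T) (e_sym : symmetric e)
  (e_irr : irreflexive e) (k : nat) (k_pos : 0 < k) (I : {set 'I_k})
  (s t : 'I_k -> T)
  (s_inj : injective s) (t_inj : injective t) (st_dis : forall i j, s i != t j)
  (conn : k_connected e (26 * k + 24 * #|I|)) :
  (exists A : {set T}, nice e A /\ has_pbm e s t I A) <->
  (forall A : {set T}, nice e A -> has_pbm e s t I A).
Proof.
split=> [[A0 [/niceP[X0 [minX0 nice0]] pbm0]] A /niceP[X [minX niceX]] | all_nice].
  have [large | small] := leqP (2 * k + 2 * #|I|) #|X|.
    apply: has_pbm_of_large_covers => // Y occY.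
    exact: leq_trans large (minX.2 Y occY).
  set W := X0 :|: X.
  have cardW : #|W| <= #|X0| + #|X| := (leq_card_setU X0 X).1.
  have X0X : #|X0| <= #|X| := minX0.2 X minX.1.
  have Wc : #|W| < 26 * k + 24 * #|I| by lia.
  have deg x : 26 * k + 24 * #|I| <= ndeg e x [set: T] := k_connected_ndeg e_irr x conn.
  have sX0 : X0 \subset W := subsetUl X0 X.
  have sX : X \subset W := subsetUr X0 X.
  have [agree | agree] := nice_for_agree conn Wc nice0 niceX sX0 sX.
    apply: (has_pbm_transfer _ pbm0) => x flip.
    by have := flipped_nbrs nice0 niceX sX0 sX agree (deg x) flip; lia.
  rewrite -(setCK A); apply/has_pbmC/(has_pbm_transfer _ pbm0) => x flip.
  by have := flipped_nbrs nice0 (nice_forC niceX) sX0 sX agree (deg x) flip; lia.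
by have [A niceA] := nice_exists e; exists A; split=> //; apply: all_nice.
Qed.
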